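(* Let $(R,B)$ be an EIC problem with problem graph $G=(V,E)$, and let $\mathcal{A}_{(R,B)}$ be the image of its column repetition function. Then $$\omega(\overline{G})\le \mathrm{minrk}_2(G)\le \mathrm{rminrk}_2(G,\mathcal{A}_{(R,B)})\le \chi(\overline{G}).$$
   Context: An EIC problem is a pair $(R,B)$ of matrices in $\mathbb{F}_2^{n\times m}$ with disjoint supports (node $u$ needs block $a$ iff $R_{ua}=1$, has block $a$ iff $B_{ua}=1$). Requirement pairs: $P=\{(u,a):R_{ua}=1\}$. The problem graph $G=(V,E)$ is the directed graph with vertices $V=\{v_{(u,a)}:(u,a)\in P\}$ and an edge from $v_{(u,a)}$ to $v_{(w,b)}$ (for distinct vertices) iff $B_{ub}=1$ or $a=b$. A matrix $A'\in\mathbb{F}_2^{|V|\times|V|}$ (indexed by $V$) fits $G$ if all diagonal entries are $1$ and $A'_{xy}=0$ whenever $x\neq y$, $(x,y)\notin E$. $\mathrm{minrk}_2(G)$ is the minimum rank over $\mathbb{F}_2$ of a matrix fitting $G$. The column repetition function $\phi_{(R,B)}:\mathbb{F}_2^{|V|\times m}\to\mathbb{F}_2^{|V|\times|V|}$ sends $A$ (rows indexed by $V$) to the matrix whose column indexed by $v_{(u,a)}$ is the $a$-th column of $A$; $\mathcal{A}_{(R,B)}$ is its image, and $\mathrm{rminrk}_2(G,\mathcal{A}_{(R,B)})$ is the minimum rank of a matrix in $\mathcal{A}_{(R,B)}$ fitting $G$. For a directed graph $H$ (loops disregarded): its complement $\overline H$ has an edge $(x,y)$, $x\ne y$, iff $(x,y)$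 is not an edge of $H$; a clique is a vertex set in which every ordered pair of distinct vertices is an edge; $\omega(H)$ is the maximum clique size; an independent set is a vertex set containing no edge in either direction; $\chi(H)$ is the minimum number of parts in a partition of the vertices into independent sets. *)

From HB Require Import structures.
From mathcomp Require Import all_boot all_order all_algebra.
Set Implicit Arguments. Unset Strict Implicit. Unset Printing Implicit Defensive.
Import GRing.Theory.
Local Open Scope ring_scope.

Section Digraph.
Variable T : finType.
Variable e : rel T.

Definition compl : rel T := fun x y => (x != y) && ~~ e x y.

Definition clique (S : {set T}) : bool :=
  [forall x in S, forall y in S, (x != y) ==> e x y].

Definition indep (S : {set T}) : bool :=
  [forall x in S, forall y in S, (x != y) ==> ~~ e x y].

Definition omega : nat := \max_(S : {set T} | clique S) #|S|.

(* minimum number of parts of a partition of the vertex set into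
   independent sets (the default #|T| is never used: singletons work) *)
Definition chi : nat :=
  \big[minn/#|T|]_(P : {set {set T}} |
       partition P [set: T] && [forall S in P, indep S]) #|P|.
End Digraph.

Section EIC.
Variables n m : nat.
Variables R B : 'M['F_2]_(n, m).

(* vertices v_(u,a) for requirement pairs (u,a) with R_{ua} = 1 *)
Definition Vt := {p : 'I_n * 'I_m | R p.1 p.2 == 1}.

Definition pgraph : rel Vt := fun x y =>
  (x != y) && ((B (val x).1 (val y).2 == 1) || ((val x).2 == (val y).2)).

Definition nV : nat := #|{: Vt}|.

Definition vert (i : 'I_nV) : Vt := enum_val i.

Definition fits (A : 'M['F_2]_nV) : bool :=
  [forall i, A i i == 1] &&
  [forall i, forall j, ((i != j) && ~~ pgraph (vert i) (vert j)) ==> (A i j == 0)].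

Definition minrk2 : nat := \big[minn/nV]_(A : 'M['F_2]_nV | fits A) \rank A.

Definition colrep (A : 'M['F_2]_(nV, m)) : 'M['F_2]_nV :=
  \matrix_(i, j) A i (val (vert j)).2.

Definition rminrk2 : nat :=
  \big[minn/nV]_(A : 'M['F_2]_(nV, m) | fits (colrep A)) \rank (colrep A).
End EIC.
Arguments pgraph {n m} R B.

(** A set of vertices pairwise non-adjacent in G indexes an identity principal
    submatrix of every matrix fitting G, so its size bounds the rank from below.
    Conversely, given a partition of V into cliques of G, let row v of an
    n_V x m matrix have a 1 in column c iff some vertex in the clique of v
    requests block c.  Its column repetition fits G: a 1 in position (v, w)
    comes from a vertex z in the clique of v with the block of w, and either
    z = v, or the edge from v to z in G turns into an edge from v to w.  Its
    rows are constant on each clique, so its rank is at most the number of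
    cliques.  The middle inequality holds because [A_(R,B)] is a subfamily of
    all fitting matrices. *)
From mathcomp Require Import all_boot all_order all_algebra.
Set Implicit Arguments. Unset Strict Implicit.
Import Order.TTheory GRing.Theory.
Local Open Scope ring_scope.

Lemma mxrank_mxsub (F : fieldType) m n m' n' (f : 'I_m' -> 'I_m)
    (g : 'I_n' -> 'I_n) (A : 'M[F]_(m, n)) :
  (\rank (mxsub f g A) <= \rank A)%N.
Proof.
have -> : mxsub f g A = rowsub f 1%:M *m A *m colsub g 1%:M.
  by rewrite mulmx_colsub mulmx1 -rowsubE; apply/matrixP=> i j; rewrite !mxE.
by apply: leq_trans (mxrankM_maxl _ _) _; apply: mxrankM_maxr.
Qed.

Section ComplementGraph.
Variables (T : finType) (e : rel T).

Lemma clique_compl S :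
  clique (compl e) S -> {in S &, forall x y, x != y -> ~~ e x y}.
Proof.
move=> /forall_inP cS x y xS yS xy.
by move: (forall_inP (cS x xS) y yS) => /implyP/(_ xy)/andP[].
Qed.

Lemma indep_compl S :
  indep (compl e) S -> {in S &, forall x y, x != y -> e x y}.
Proof.
move=> /forall_inP iS x y xS yS xy.
by move: (forall_inP (iS x xS) y yS) => /implyP/(_ xy); rewrite /compl xy negbK.
Qed.

End ComplementGraph.

Section ProblemGraph.
Variables (n m : nat) (R B : 'M['F_2]_(n, m)).
Local Notation G := (pgraph R B).
Local Notation V := (Vt R).

Lemma vert_inj : injective (@vert _ _ R).
Proof. exact: enum_val_inj. Qed.

Lemma fitsP (A : 'M['F_2]_(nV R)) :
  reflect ((forall i, A i i = 1) /\
           (forall i j, i != j -> ~~ G (vert i) (vert j) -> A i j = 0))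
          (fits B A).
Proof.
apply: (iffP andP) => [[/forallP A1 /forallP A0] | [A1 A0]]; split.
- by move=> i; apply/eqP.
- by move=> i j ij nG; apply/eqP; move/forallP: (A0 i) => /(_ j)/implyP; apply; rewrite ij.
- by apply/forallP=> i; rewrite A1.
- by apply/forallP=> i; apply/forallP=> j; apply/implyP=> /andP[ij nG]; rewrite A0.
Qed.

Lemma clique_compl_card_le_rank (S : {set V}) (A : 'M['F_2]_(nV R)) :
  clique (compl G) S -> fits B A -> (#|S| <= \rank A)%N.
Proof.
move=> cS /fitsP[A1 A0].
pose f (k : 'I_#|S|) : 'I_(nV R) := enum_rank (enum_val k).
have fK k : vert (f k) = enum_val k by apply: enum_rankK.
have idS : mxsub f f A = 1%:M.
  apply/matrixP=> i j; rewrite !mxE; case: eqVneq => [-> | ij]; first exact: A1.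
  have vij : enum_val i != enum_val j by apply: contra_neq ij => /enum_val_inj.
  apply: A0; first by apply: contra_neq vij => /(congr1 (@vert _ _ R)); rewrite !fK.
  by rewrite !fK; apply: (clique_compl cS) => //; apply: enum_valP.
by rewrite -(mxrank1 'F_2 #|S|) -idS mxrank_mxsub.
Qed.

Lemma colrep_fits_of_clique_partition (P : {set {set V}}) :
  partition P [set: V] -> [forall S in P, indep (compl G) S] ->
  exists2 A : 'M['F_2]_(nV R, m), fits B (colrep A) & (\rank (colrep A) <= #|P|)%N.
Proof.
move=> /and3P[/eqP coverP _ _] /forall_inP cliqueP.
have blockP x : pblock P x \in P by rewrite pblock_mem // coverP inE.
have mem_block x : x \in pblock P x by rewrite mem_pblock coverP inE.
pose h i : 'I_#|P| := enum_rank_in (blockP (vert i)) (pblock P (vert i)).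
have hK i : enum_val (h i) = pblock P (vert i) by rewrite enum_rankK_in.
pose C : 'M['F_2]_(#|P|, m) :=
  \matrix_(k, c) [exists z in enum_val (A := P) k, (val z).2 == c]%:R.
exists (rowsub h C).
  apply/fitsP; split=> [i | i j ij nGij]; rewrite !mxE hK.
    by case: exists_inP => // -[]; exists (vert i).
  case: exists_inP => // -[z zi /eqP /= zj]; case/negP: nGij.
  rewrite /pgraph (inj_eq vert_inj) ij /=.
  have [zi_eq | zNi] := eqVneq z (vert i); first by rewrite -zi_eq zj eqxx orbT.
  have := indep_compl (cliqueP _ (blockP (vert i))) (mem_block _) zi.
  by rewrite eq_sym zNi /pgraph zj => /(_ isT)/andP[].
have -> : colrep (rowsub h C) = mxsub h (fun j => (val (vert j)).2) C.
  by apply/matrixP=> i j; rewrite !mxE.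
exact: leq_trans (mxrank_mxsub _ _ _) (rank_leq_row C).
Qed.

End ProblemGraph.

Theorem corollary1 (n m : nat) (R B : 'M['F_2]_(n, m))
  (disj : forall (u : 'I_n) (a : 'I_m), R u a = 0 \/ B u a = 0) :
  [/\ (omega (compl (pgraph R B)) <= minrk2 R B)%N,
      (minrk2 R B <= rminrk2 R B)%N &
      (rminrk2 R B <= chi (compl (pgraph R B)))%N].
Proof.
(* [minn] is [Order.min] on [nat], so the [bigmin] lemmas of the order
   library apply. *)
split.
- apply/bigmax_leqP=> S cS; apply: (@le_bigmin _ nat) => [|A fA].
    exact: max_card.
  exact: clique_compl_card_le_rank cS fA.
- apply: (@le_bigmin _ nat) => [|A fA]; first exact: (@bigmin_le_id _ nat).
  exact: (@bigmin_le_cond _ nat) fA.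
- apply: (@le_bigmin _ nat) => [|P /andP[partP cliqueP]].
    exact: (@bigmin_le_id _ nat).
  have [A fA rankA] := colrep_fits_of_clique_partition partP cliqueP.
  by apply: leq_trans rankA; apply: (@bigmin_le_cond _ nat).
Qed.
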